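(* Let $L$ be a Lipschitz language, let $\mu$ be an ultracharge on a nonempty set $I$, let $(M_i)_{i\in I}$ be $L$-structures, and let $M=\prod_\mu M_i$ be their ultramean. Then for every affine $L$-formula $\phi(x_1,\dots,x_n)$ and all $[a^1_i],\dots,[a^n_i]\in M$, $$\phi^{M}([a^{1}_{i}],\ldots,[a^{n}_{i}])=\int\phi^{M_{i}}(a^{1}_{i},\ldots,a^{n}_{i})\,d\mu .$$
   Context: A Lipschitz language $L$ consists of constant symbols, function symbols and relation symbols; each function symbol $F$ (resp. relation symbol $R$) has an arity $n\ge 1$ and a Lipschitz constant $\lambda_F\ge0$ (resp. $\lambda_R\ge 0$); $L$ contains a binary relation symbol $d$ with $\lambda_d=1$. An $L$-structure is a complete metric space $(M,d)$ of diameter at most $1$ (with $d$ interpreting the symbol $d$) together with elements $c^M$ for constants, maps $F^M:M^n\to M$ with $d(F^M(\bar a),F^M(\bar b))\le\lambda_F d(\bar a,\bar b)$ and maps $R^M:M^n\to[0,1]$ with $R^M(\bar a)-R^M(\bar b)\le\lambda_R d(\bar a,\bar b)$, where $d(\bar a,\bar b)=\sum_i d(a_i,b_i)$ on $M^n$. Affine formulas are built from the atomic formulas $1$, $d(t_1,t_2)$, $R(t_1,\dots,t_n)$ ($t_j$ terms) by $\phi+\psi$, $r\phi$ ($r\in\mathbb R$), $\sup_x\phi$, $\inf_x\phi$; their values $\phi^M(\bar a)\in\mathbb R$ are defined in the evident way (sup/inf taken over $M$); the same definition of values applies to structures whose metric is only a pseudometric or not complete. An ultracharge on $I$ is a finitely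 additive probability measure on the full power set of $I$; every bounded real function on $I$ is integrable with respect to it. The ultramean $M=\prod_\mu M_i$: on $\prod_i M_i$ put the pseudometric $d((a_i),(b_i))=\int d_i(a_i,b_i)\,d\mu$, let $[a_i]$ denote the class of $(a_i)$ modulo distance $0$, let $M$ be the set of classes with the induced metric, and set $c^M=[c^{M_i}]$, $F^M([a^1_i],\dots,[a^n_i])=[F^{M_i}(a^1_i,\dots,a^n_i)]$, $R^M([a^1_i],\dots,[a^n_i])=\int R^{M_i}(a^1_i,\dots,a^n_i)\,d\mu$ (these are well defined; $M$ need not be metrically complete). *)

From HB Require Import structures.
From mathcomp Require Import all_boot all_order all_algebra.
From mathcomp Require Import boolp classical_sets reals.
Set Implicit Arguments. Unset Strict Implicit. Unset Printing Implicit Defensive.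
Import Order.TTheory GRing.Theory Num.Theory.
Local Open Scope classical_set_scope.
Local Open Scope ring_scope.

Record ultracharge (R : realType) (I : Type) := Ultracharge {
  uc_mes :> set I -> R;
  uc_ge0 : forall A, 0 <= uc_mes A;
  uc_setT : uc_mes [set: I] = 1;
  uc_add : forall A B, A `&` B = set0 -> uc_mes (A `|` B) = uc_mes A + uc_mes B
}.

Definition is_partition (I : Type) (n : nat) (A : 'I_n -> set I) : Prop :=
  (forall k l : 'I_n, k != l -> A k `&` A l = set0) /\
  (forall i : I, exists k : 'I_n, A k i).

Definition integral (R : realType) (I : Type) (mu : ultracharge R I)
    (f : I -> R) : R :=
  sup [set s | exists (n : nat) (A : 'I_n -> set I) (c : 'I_n -> R),
      [/\ is_partition A,
          (forall (k : 'I_n) (i : I), A k i -> c k <= f i) &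
          s = \sum_(k < n) c k * mu (A k)]].

(** The distinguished binary symbol d is built in (see formula Fdist). *)
Record language (R : realType) := Language {
  const_sym : Type;
  func_sym : Type;
  rel_sym : Type;
  farity : func_sym -> nat;
  rarity : rel_sym -> nat;
  flip : func_sym -> R;
  rlip : rel_sym -> R;
  farity_pos : forall F, (0 < farity F)%N;
  rarity_pos : forall P, (0 < rarity P)%N;
  flip_ge0 : forall F, 0 <= flip F;
  rlip_ge0 : forall P, 0 <= rlip P
}.

(** Pre-structures: interpretations of all symbols, no axioms
    (used for the ultramean, whose metric need not be complete). *)
Record prestructure (R : realType) (L : language R) := Prestructure {
  carrier : Type;
  pdist : carrier -> carrier -> R;
  cinterp : const_sym L -> carrier;
  finterp : forall F : func_sym L, ('I_(farity F) -> carrier) -> carrier;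
  rinterp : forall P : rel_sym L, ('I_(rarity P) -> carrier) -> R
}.

Arguments pdist {R L} p.
Arguments cinterp {R L} p.
Arguments finterp {R L} p F.
Arguments rinterp {R L} p P.

Arguments carrier {R L} p.
Definition tdist (R : realType) (L : language R) (M : prestructure L) (n : nat)
  (a b : 'I_n -> carrier M) : R := \sum_(k < n) pdist M (a k) (b k).

Definition is_structure (R : realType) (L : language R) (M : prestructure L)
  : Prop :=
    inhabited (carrier M) /\
      (forall x y, pdist M x y = 0 <-> x = y) /\
      (forall x y, pdist M x y = pdist M y x) /\
      (forall x y z, pdist M x z <= pdist M x y + pdist M y z) /\
      (forall x y, 0 <= pdist M x y <= 1) /\
      (forall u : nat -> carrier M,
         (forall e : R, 0 < e -> exists N : nat, forall m n : nat,
            (N <= m)%N -> (N <= n)%N -> pdist M (u m) (u n) < e) ->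
         exists x, forall e : R, 0 < e -> exists N : nat, forall n : nat,
            (N <= n)%N -> pdist M (u n) x < e) /\
      (forall (F : func_sym L) (a b : 'I_(farity F) -> carrier M),
         pdist M (finterp M F a) (finterp M F b) <= flip F * tdist a b) /\
      (forall (P : rel_sym L) (a : 'I_(rarity P) -> carrier M),
         0 <= rinterp M P a <= 1) /\
      (forall (P : rel_sym L) (a b : 'I_(rarity P) -> carrier M),
         rinterp M P a - rinterp M P b <= rlip P * tdist a b).

Record structure (R : realType) (L : language R) := Structure {
  struct_pre :> prestructure L;
  struct_ax : is_structure struct_pre
}.

Inductive term (R : realType) (L : language R) : Type :=
  | Tvar : nat -> term L
  | Tconst : const_sym L -> term L
  | Tapp (F : func_sym L) : ('I_(farity F) -> term L) -> term L.

Inductive formula (R : realType) (L : language R) : Type :=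
  | Fone : formula L
  | Fdist : term L -> term L -> formula L
  | Frel (P : rel_sym L) : ('I_(rarity P) -> term L) -> formula L
  | Fadd : formula L -> formula L -> formula L
  | Fscale : R -> formula L -> formula L
  | Fsup : nat -> formula L -> formula L
  | Finf : nat -> formula L -> formula L.

Fixpoint teval (R : realType) (L : language R) (M : prestructure L)
  (e : nat -> carrier M) (t : term L) : carrier M :=
  match t with
  | Tvar x => e x
  | Tconst c => cinterp M c
  | Tapp F ts => finterp M F (fun k => teval e (ts k))
  end.

Definition upd (T : Type) (e : nat -> T) (x : nat) (m : T) : nat -> T :=
  fun y => if y == x then m else e y.

Fixpoint feval (R : realType) (L : language R) (M : prestructure L)
  (phi : formula L) : (nat -> carrier M) -> R :=
  match phi with
  | Fone => fun _ => 1
  | Fdist t1 t2 => fun e => pdist M (teval e t1) (teval e t2)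
  | Frel P ts => fun e => rinterp M P (fun k => teval e (ts k))
  | Fadd p q => fun e => feval p e + feval q e
  | Fscale r p => fun e => r * feval p e
  | Fsup x p => fun e => sup [set feval p (upd e x m) | m in [set: carrier M]]
  | Finf x p => fun e => inf [set feval p (upd e x m) | m in [set: carrier M]]
  end.

Arguments teval {R L} M e t.
Arguments feval {R L} M phi.

Section Ultramean.
Variables (R : realType) (L : language R) (I : Type) (mu : ultracharge R I)
  (M : I -> structure L).

Definition prodT := forall i : I, carrier (M i).

Definition prod_dist (a b : prodT) : R :=
  integral mu (fun i => pdist (M i) (a i) (b i)).

Definition um_class_set (a : prodT) : set prodT :=
  [set b | prod_dist a b = 0].

Definition um_carrier : Type :=
  {S : set prodT | exists a : prodT, S = um_class_set a}.

Definition um_class (a : prodT) : um_carrier :=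
  exist _ (um_class_set a) (ex_intro _ a erefl).

Definition um_rep (xi : um_carrier) : prodT := projT1 (cid (proj2_sig xi)).

Definition ultramean : prestructure L := @Prestructure R L um_carrier
  (fun xi eta => prod_dist (um_rep xi) (um_rep eta))
  (fun c => um_class (fun i => cinterp (M i) c))
  (fun F xis => um_class (fun i => finterp (M i) F (fun k => um_rep (xis k) i)))
  (fun P xis => integral mu (fun i => rinterp (M i) P (fun k => um_rep (xis k) i))).

End Ultramean.

From HB Require Import structures.
From mathcomp Require Import all_boot all_order all_algebra.
From mathcomp Require Import boolp classical_sets reals numfun.
From mathcomp Require Import lra.
Set Implicit Arguments. Unset Strict Implicit. Unset Printing Implicit Defensive.
Import Order.TTheory GRing.Theory Num.Theory.
Local Open Scope classical_set_scope.
Local Open Scope ring_scope.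

(* Finite additivity makes the integral of step functions monotone, and every
   bounded function is squeezed between two step functions on a common finite
   partition whose integrals differ by at most e; this gives linearity and
   monotonicity of the integral.  The integral moreover commutes with suprema
   over the product, sup_b int f_i(b_i) dmu = int sup_m f_i(m) dmu, because an
   e-maximiser may be chosen independently in each coordinate.  Lipschitz
   continuity makes the interpretations in the ultramean independent of
   representatives, and the theorem follows by induction on phi, the
   quantifier cases being exactly this exchange of sup (or inf) and integral. *)

Section SupInf.
Variable R : realType.

Lemma image_opp (T : Type) (g : T -> R) (A : set T) :
  -%R @` [set g m | m in A] = [set - g m | m in A].
Proof. exact: image_comp. Qed.

Lemma norm_sup_image_le (T : Type) (g : T -> R) (B : R) : inhabited T ->
  (forall m, `|g m| <= B) -> `|sup [set g m | m in [set: T]]| <= B.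
Proof.
move=> [m0] gB; set S := [set g m | m in [set: T]].
have Sm0 : S (g m0) by exists m0.
have ubB : ubound S B by move=> _ [m _ <-]; exact: le_trans (ler_norm _) (gB m).
rewrite ler_norml; apply/andP; split; last by apply: ge_sup => //; exists (g m0).
have supS : has_sup S by split; [exists (g m0)|exists B].
have := sup_upper_bound supS Sm0; have := gB m0.
by rewrite ler_norml => /andP[? _]; lra.
Qed.

Lemma norm_inf_image_le (T : Type) (g : T -> R) (B : R) : inhabited T ->
  (forall m, `|g m| <= B) -> `|inf [set g m | m in [set: T]]| <= B.
Proof.
move=> Tinh gB; rewrite /inf normrN image_opp.
by apply: norm_sup_image_le => // m; rewrite normrN.
Qed.

End SupInf.

Section StepFunctions.
Variables (R : realType) (I : Type) (mu : ultracharge R I).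

Lemma ultracharge0 : mu set0 = 0.
Proof.
have := uc_add mu (A := set0) (B := set0); rewrite setU0 setI0 => /(_ erefl).
lra.
Qed.

Lemma ultracharge_splitI X A : mu X = mu (X `&` A) + mu (X `&` ~` A).
Proof.
rewrite -uc_add; last by rewrite setIACA setICr setI0.
by rewrite -setIUr setUCr setIT.
Qed.

Definition step_fun (s : seq (R * set I)) (i : I) : R :=
  \sum_(p <- s) p.1 * \1_(p.2) i.

Definition step_int_on (s : seq (R * set I)) (E : set I) : R :=
  \sum_(p <- s) p.1 * mu (p.2 `&` E).

Definition step_int (s : seq (R * set I)) : R := \sum_(p <- s) p.1 * mu p.2.

Definition step_scale (r : R) (s : seq (R * set I)) : seq (R * set I) :=
  [seq (r * p.1, p.2) | p <- s].

Lemma step_int_onT s : step_int_on s [set: I] = step_int s.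
Proof. by apply: eq_bigr => p _; rewrite setIT. Qed.

Lemma step_int_on_splitI s E A :
  step_int_on s E = step_int_on s (E `&` A) + step_int_on s (E `&` ~` A).
Proof.
rewrite -big_split /=; apply: eq_bigr => p _.
by rewrite -mulrDr !setIA -ultracharge_splitI.
Qed.

Lemma step_fun_cat s t i : step_fun (s ++ t) i = step_fun s i + step_fun t i.
Proof. exact: big_cat. Qed.

Lemma step_int_cat s t : step_int (s ++ t) = step_int s + step_int t.
Proof. exact: big_cat. Qed.

Lemma step_fun_scale r s i : step_fun (step_scale r s) i = r * step_fun s i.
Proof.
by rewrite /step_fun big_map mulr_sumr; apply: eq_bigr => p _; rewrite mulrA.
Qed.

Lemma step_int_scale r s : step_int (step_scale r s) = r * step_int s.
Proof.
by rewrite /step_int big_map mulr_sumr; apply: eq_bigr => p _; rewrite mulrA.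
Qed.

Lemma step_int_on_lb s E c : (forall i, E i -> c <= step_fun s i) ->
  c * mu E <= step_int_on s E.
Proof.
elim: s E c => [|[c0 A0] s IHs] E c cE.
  rewrite /step_int_on big_nil.
  have [[i Ei]|/set0P/negP/negPn/eqP->] := pselect (E !=set0).
    apply: mulr_le0_ge0 (uc_ge0 _ _).
    by move: (cE i Ei); rewrite /step_fun big_nil.
  by rewrite ultracharge0 mulr0.
have inA : forall i, (E `&` A0) i -> c - c0 <= step_fun s i.
  move=> i [Ei A0i]; move: (cE i Ei).
  rewrite /step_fun big_cons indicE mem_set //=; lra.
have outA : forall i, (E `&` ~` A0) i -> c <= step_fun s i.
  move=> i [Ei A0i]; move: (cE i Ei).
  rewrite /step_fun big_cons indicE memNset //=; lra.
rewrite /step_int_on big_cons -/(step_int_on s E) (step_int_on_splitI s E A0) /=.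
have := IHs _ _ inA; have := IHs _ _ outA.
rewrite (ultracharge_splitI E A0) [A0 `&` E]setIC mulrBl mulrDr; lra.
Qed.

Lemma le_step_int s t : (forall i, step_fun s i <= step_fun t i) ->
  step_int s <= step_int t.
Proof.
move=> st; have : 0 * mu [set: I] <= step_int_on (t ++ step_scale (-1) s) [set: I].
  apply: step_int_on_lb => i _.
  by rewrite step_fun_cat step_fun_scale; move: (st i); lra.
by rewrite step_int_onT step_int_cat step_int_scale; lra.
Qed.

Definition partition_step n (A : 'I_n -> set I) (c : 'I_n -> R) :=
  [seq (c k, A k) | k <- enum 'I_n].

Lemma step_int_partition n A c :
  step_int (@partition_step n A c) = \sum_(k < n) c k * mu (A k).
Proof. by rewrite /step_int big_map big_enum. Qed.

Lemma step_fun_partition n (A : 'I_n -> set I) c i k :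
  is_partition A -> A k i -> step_fun (partition_step A c) i = c k.
Proof.
move=> [disjA _] Aki; rewrite /step_fun big_map big_enum /=.
rewrite (bigD1 k) //= indicE mem_set // mulr1 big1 ?addr0 // => l lk.
rewrite indicE memNset ?mulr0 // => Ali.
by have : (A l `&` A k) i by []; rewrite disjA.
Qed.

Lemma sum_ultracharge_partition n (A : 'I_n -> set I) :
  is_partition A -> \sum_(k < n) mu (A k) = 1.
Proof.
move=> partA; rewrite -(uc_setT mu).
have -> : mu [set: I] = step_int [:: (1, [set: I])].
  by rewrite /step_int big_seq1 mul1r.
have -> : \sum_(k < n) mu (A k) = step_int (partition_step A (fun=> 1)).
  by rewrite step_int_partition; apply: eq_bigr => k _; rewrite mul1r.
apply/le_anti/andP; split; apply: le_step_int => i; have [k Aki] := partA.2 i;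
  by rewrite (step_fun_partition _ partA Aki) /step_fun big_seq1 indicT mulr1.
Qed.

End StepFunctions.

Section Integral.
Variables (R : realType) (I : Type) (mu : ultracharge R I).
Local Notation step_int := (step_int mu).
Local Notation "\int f" := (integral mu f) (at level 10, f at level 8).

Definition bounded (f : I -> R) := exists B : R, forall i, `|f i| <= B.

Lemma bounded01 f : (forall i, 0 <= f i <= 1) -> bounded f.
Proof. by move=> f01; exists 1 => i; have /andP[f0 f1] := f01 i; rewrite ger0_norm. Qed.

Lemma bounded_cst c : bounded (fun=> c).
Proof. by exists `|c|. Qed.

Lemma boundedD f g : bounded f -> bounded g -> bounded (fun i => f i + g i).
Proof.
move=> [B fB] [C gC]; exists (B + C) => i.
exact: le_trans (ler_normD _ _) (lerD (fB i) (gC i)).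
Qed.

Lemma boundedZ r f : bounded f -> bounded (fun i => r * f i).
Proof. by move=> [B fB]; exists (`|r| * B) => i; rewrite normrM ler_wpM2l. Qed.

Lemma bounded_sum n (g : 'I_n -> I -> R) : (forall k, bounded (g k)) ->
  bounded (fun i => \sum_(k < n) g k i).
Proof.
move=> /choice[B gB]; exists (\sum_(k < n) B k) => i.
by apply: le_trans (ler_norm_sum _ _ _) _; apply: ler_sum => k _; exact: gB.
Qed.

Definition lower_sums (f : I -> R) : set R :=
  [set s | exists (n : nat) (A : 'I_n -> set I) (c : 'I_n -> R),
      [/\ is_partition A,
          (forall (k : 'I_n) (i : I), A k i -> c k <= f i) &
          s = \sum_(k < n) c k * mu (A k)]].

Lemma lower_sums_step f l : lower_sums f l ->
  exists2 s, (forall i, step_fun s i <= f i) & step_int s = l.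
Proof.
move=> [n [A [c [partA cf ->]]]]; exists (partition_step A c); last first.
  exact: step_int_partition.
by move=> i; have [k Aki] := partA.2 i; rewrite (step_fun_partition _ partA Aki) cf.
Qed.

Lemma partition_approx f e : bounded f -> 0 < e ->
  exists n (A : 'I_n -> set I) (c : 'I_n -> R),
    is_partition A /\ forall k i, A k i -> c k <= f i <= c k + e.
Proof.
move=> [B fB] e0.
have fB' i : - `|B| <= f i <= `|B|.
  by rewrite -ler_norml; exact: le_trans (fB i) (ler_norm B).
pose x i := (f i + `|B|) / e.
have x0 i : 0 <= x i by apply: divr_ge0 (ltW e0); have := fB' i; lra.
pose n := (Num.truncn (2 * `|B| / e)).+1.
have xn i : (Num.truncn (x i) < n)%N.
  rewrite ltnS; apply: le_truncn; rewrite ler_pM2r ?invr_gt0 //; have := fB' i; lra.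
exists n, (fun k => [set i | Num.truncn (x i) = k]), (fun k => k%:R * e - `|B|).
split; first split.
- move=> k l kl; apply/seteqP; split => i //= [xk xl].
  by move: kl; rewrite -(inj_eq val_inj) /= -xk -xl eqxx.
- by move=> i; exists (Ordinal (xn i)).
- move=> k i /= xk; have := truncn_itv (x0 i); rewrite xk => /andP[].
  rewrite /x ler_pdivlMr // ltr_pdivrMr // -natr1 mulrDl mul1r; lra.
Qed.

Lemma step_sandwich f e : bounded f -> 0 < e -> exists s t,
  [/\ forall i, step_fun s i <= f i, forall i, f i <= step_fun t i,
      step_int t = step_int s + e & lower_sums f (step_int s)].
Proof.
move=> bf e0; have [n [A [c [partA cf]]]] := partition_approx bf e0.
exists (partition_step A c), (partition_step A (fun k => c k + e)); split.
- move=> i; have [k Aki] := partA.2 i.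
  by rewrite (step_fun_partition _ partA Aki); case/andP: (cf k i Aki).
- move=> i; have [k Aki] := partA.2 i.
  by rewrite (step_fun_partition _ partA Aki); case/andP: (cf k i Aki).
- rewrite !step_int_partition; under eq_bigr do rewrite mulrDl.
  by rewrite big_split /= -mulr_sumr sum_ultracharge_partition // mulr1.
- exists n, A, c; split => //; last by rewrite step_int_partition.
  by move=> k i Aki; case/andP: (cf k i Aki).
Qed.

Lemma lower_sums_neq0 f : bounded f -> lower_sums f !=set0.
Proof.
by move=> bf; have [s [_ [_ _ _ fs]]] := step_sandwich bf ltr01; exists (step_int s).
Qed.

Lemma ubound_lower_sums f t : (forall i, f i <= step_fun t i) ->
  ubound (lower_sums f) (step_int t).
Proof.
move=> ft _ /lower_sums_step[s sf <-].
by apply: le_step_int => i; exact: le_trans (sf i) (ft i).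
Qed.

Lemma integral_le_step f t : bounded f -> (forall i, f i <= step_fun t i) ->
  \int f <= step_int t.
Proof.
by move=> bf ft; apply: ge_sup; [exact: lower_sums_neq0|exact: ubound_lower_sums].
Qed.

Lemma step_le_integral f s : bounded f -> (forall i, step_fun s i <= f i) ->
  step_int s <= \int f.
Proof.
move=> bf sf; apply/ler_addgt0Pr => e e0.
have [s0 [t0 [_ ft0 st0 ls0]]] := step_sandwich bf e0.
have : step_int s0 <= \int f.
  apply: sup_upper_bound => //; split; first by exists (step_int s0).
  by exists (step_int t0); exact: ubound_lower_sums.
have : step_int s <= step_int t0.
  by apply: le_step_int => i; exact: le_trans (sf i) (ft0 i).
lra.
Qed.

Lemma upper_step_approx f e : bounded f -> 0 < e ->
  exists2 t, (forall i, f i <= step_fun t i) & step_int t <= \int f + e.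
Proof.
move=> bf e0; have [s [t [sf ft st _]]] := step_sandwich bf e0.
by exists t => //; rewrite st lerD2r step_le_integral.
Qed.

Lemma lower_step_approx f e : bounded f -> 0 < e ->
  exists2 s, (forall i, step_fun s i <= f i) & \int f - e <= step_int s.
Proof.
move=> bf e0; have [s [t [sf ft st _]]] := step_sandwich bf e0.
by exists s => //; have := integral_le_step bf ft; rewrite st; lra.
Qed.

Lemma integral_unique f v : bounded f ->
  (forall s, (forall i, step_fun s i <= f i) -> step_int s <= v) ->
  (forall t, (forall i, f i <= step_fun t i) -> v <= step_int t) -> \int f = v.
Proof.
move=> bf lev gev; apply/le_anti/andP; split.
  apply: ge_sup; first exact: lower_sums_neq0.
  by move=> _ /lower_sums_step[s /lev sv <-].
apply/ler_addgt0Pr => e e0; have [t ft te] := upper_step_approx bf e0.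
exact: le_trans (gev _ ft) te.
Qed.

Lemma integral_cst c : \int (fun=> c) = c.
Proof.
have step1 : step_int [:: (c, [set: I])] = c.
  by rewrite /step_int big_seq1 uc_setT mulr1.
have step1E i : step_fun [:: (c, [set: I])] i = c.
  by rewrite /step_fun big_seq1 indicT mulr1.
apply: integral_unique; first exact: bounded_cst.
  by move=> s sc; rewrite -step1; apply: le_step_int => i; rewrite step1E.
by move=> t ct; rewrite -step1; apply: le_step_int => i; rewrite step1E.
Qed.

Lemma le_integral f g : bounded f -> bounded g -> (forall i, f i <= g i) ->
  \int f <= \int g.
Proof.
move=> bf bg fg; apply/ler_addgt0Pr => e e0.
have [s sf fs] := lower_step_approx bf e0.
have : step_int s <= \int g.
  by apply: step_le_integral => // i; exact: le_trans (sf i) (fg i).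
lra.
Qed.

Lemma integralD f g : bounded f -> bounded g ->
  \int (fun i => f i + g i) = \int f + \int g.
Proof.
move=> bf bg; apply: integral_unique; first exact: boundedD.
  move=> s sfg; apply/ler_addgt0Pr => e e0; have e20 : 0 < e / 2 by lra.
  have [tf ftf tfe] := upper_step_approx bf e20.
  have [tg gtg tge] := upper_step_approx bg e20.
  have : step_int s <= step_int (tf ++ tg).
    apply: le_step_int => i; rewrite step_fun_cat.
    by move: (sfg i) (ftf i) (gtg i); lra.
  rewrite step_int_cat; lra.
move=> t fgt; apply/ler_addgt0Pr => e e0; have e20 : 0 < e / 2 by lra.
have [sf' sff sfe] := lower_step_approx bf e20.
have [sg sgg sge] := lower_step_approx bg e20.
have : step_int (sf' ++ sg) <= step_int t.
  apply: le_step_int => i; rewrite step_fun_cat.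
  by move: (fgt i) (sff i) (sgg i); lra.
rewrite step_int_cat; lra.
Qed.

Lemma integralN f : bounded f -> \int (fun i => - f i) = - \int f.
Proof.
move=> bf; apply: integral_unique.
- by move: (boundedZ (-1) bf); under eq_fun do rewrite mulN1r.
- move=> s sf; rewrite lerNr -mulN1r -step_int_scale.
  by apply: integral_le_step => // i; rewrite step_fun_scale mulN1r lerNr.
- move=> t ft; rewrite lerNl -mulN1r -step_int_scale.
  by apply: step_le_integral => // i; rewrite step_fun_scale mulN1r lerNl.
Qed.

Lemma ler_integralZl r f : 0 < r -> bounded f ->
  r * \int f <= \int (fun i => r * f i).
Proof.
move=> r0 bf; rewrite -ler_pdivlMl //; apply: ge_sup; first exact: lower_sums_neq0.
move=> _ /lower_sums_step[s sf <-]; rewrite ler_pdivlMl // -step_int_scale.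
by apply: step_le_integral; [exact: boundedZ|move=> i; rewrite step_fun_scale ler_pM2l].
Qed.

Lemma integralZl_gt0 r f : 0 < r -> bounded f ->
  \int (fun i => r * f i) = r * \int f.
Proof.
move=> r0 bf; apply/le_anti; rewrite ler_integralZl // andbT.
have r'0 : 0 < r^-1 by rewrite invr_gt0.
have := ler_integralZl r'0 (boundedZ r bf).
have -> : (fun i => r^-1 * (r * f i)) = f.
  by apply: funext => i; rewrite mulKf ?gt_eqF.
by rewrite -(ler_pM2l r0) mulrA divff ?gt_eqF // mul1r.
Qed.

Lemma integralZl r f : bounded f -> \int (fun i => r * f i) = r * \int f.
Proof.
move=> bf; have [r0|r0|->] := ltgtP r 0.
- have -> : (fun i => r * f i) = (fun i => - (- r * f i)).
    by apply: funext => i; rewrite mulNr opprK.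
  rewrite integralN; last exact: boundedZ.
  by rewrite integralZl_gt0 ?oppr_gt0 // mulNr opprK.
- exact: integralZl_gt0.
- by under eq_fun do rewrite mul0r; rewrite integral_cst mul0r.
Qed.

Lemma integral_sum n (g : 'I_n -> I -> R) : (forall k, bounded (g k)) ->
  \int (fun i => \sum_(k < n) g k i) = \sum_(k < n) \int (g k).
Proof.
elim: n g => [|n IHn] g bg.
  by under eq_fun do rewrite big_ord0; rewrite integral_cst big_ord0.
under eq_fun do rewrite big_ord_recr /=.
rewrite integralD ?big_ord_recr ?IHn //; exact: bounded_sum.
Qed.

Lemma integral_sup (T : I -> Type) (f : forall i, T i -> R) (B : R) :
  (forall i, inhabited (T i)) -> (forall i m, `|f i m| <= B) ->
  sup [set \int (fun i => f i (b i)) | b in [set: forall i, T i]] =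
  \int (fun i => sup [set f i m | m in [set: T i]]).
Proof.
move=> T_inhabited fB; set integrals := [set \int _ | b in _].
pose sups i := [set f i m | m in [set: T i]].
have supS i : has_sup (sups i).
  split; first by case: (T_inhabited i) => m; exists (f i m), m.
  by exists B => _ [m _ <-]; exact: le_trans (ler_norm _) (fB i m).
have bf (b : forall i, T i) : bounded (fun i => f i (b i)) by exists B.
have bS : bounded (fun i => sup (sups i)) by exists B => i; exact: norm_sup_image_le.
have ub : ubound integrals (\int (fun i => sup (sups i))).
  move=> _ [b _ <-]; apply: le_integral => // i.
  by apply: sup_upper_bound => //; exists (b i).
have near_sup e : 0 < e ->
    exists b : forall i, T i, forall i, sup (sups i) - e < f i (b i).
  move=> e0; have near i : exists m, sup (sups i) - e < f i m.
    by have [_ [m _ <-] ?] := sup_adherent e0 (supS i); exists m.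
  by exists (fun i => projT1 (cid (near i))) => i; case: (cid (near i)).
have [b1 _] := near_sup 1 ltr01.
have integrals_neq0 : integrals !=set0 by exists (\int (fun i => f i (b1 i))), b1.
apply/le_anti/andP; split; first exact: ge_sup.
apply/ler_addgt0Pr => e e0; have [b fb] := near_sup e e0.
have : \int (fun i => sup (sups i) + - e) <= \int (fun i => f i (b i)).
  by apply: le_integral => [||i]; [exact: boundedD (bounded_cst _)|by []|exact/ltW].
have : \int (fun i => f i (b i)) <= sup integrals.
  apply: sup_upper_bound; last by exists b.
  by split; last by exists (\int (fun i => sup (sups i))).
rewrite integralD ?integral_cst //; [lra|exact: bounded_cst].
Qed.

Lemma integral_inf (T : I -> Type) (f : forall i, T i -> R) (B : R) :
  (forall i, inhabited (T i)) -> (forall i m, `|f i m| <= B) ->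
  inf [set \int (fun i => f i (b i)) | b in [set: forall i, T i]] =
  \int (fun i => inf [set f i m | m in [set: T i]]).
Proof.
move=> T_inhabited fB; rewrite /inf image_opp.
have -> : [set - \int (fun i => f i (b i)) | b in [set: forall i, T i]] =
    [set \int (fun i => - f i (b i)) | b in [set: forall i, T i]].
  by apply: eq_imagel => b _; rewrite integralN //; exists B.
rewrite (integral_sup (f := fun i m => - f i m) (B := B)) //; last first.
  by move=> i m; rewrite normrN.
rewrite -integralN; last first.
  by exists B => i; apply: norm_sup_image_le => [|m]; rewrite ?normrN.
by congr integral; apply: funext => i; rewrite image_opp.
Qed.

End Integral.

Section StructureAxioms.
Variables (R : realType) (L : language R) (N : structure L).

Lemma structure_inhabited : inhabited (carrier N).
Proof. by case: (struct_ax N). Qed.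

Lemma pdistxx x : pdist N x x = 0.
Proof. by case: (struct_ax N) => _ [dxy _]; apply/dxy. Qed.

Lemma pdistC x y : pdist N x y = pdist N y x.
Proof. by case: (struct_ax N) => _ [_ [dC _]]. Qed.

Lemma pdist_triangle x y z : pdist N x z <= pdist N x y + pdist N y z.
Proof. by case: (struct_ax N) => _ [_ [_ [dtri _]]]. Qed.

Lemma pdist_ge0_le1 x y : 0 <= pdist N x y <= 1.
Proof. by case: (struct_ax N) => _ [_ [_ [_ [d01 _]]]]. Qed.

Lemma finterp_lipschitz F (a b : 'I_(farity F) -> carrier N) :
  pdist N (finterp N F a) (finterp N F b) <= flip F * tdist a b.
Proof. by case: (struct_ax N) => _ [_ [_ [_ [_ [_ [flipF _]]]]]]. Qed.

Lemma rinterp_ge0_le1 P (a : 'I_(rarity P) -> carrier N) : 0 <= rinterp N P a <= 1.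
Proof. by case: (struct_ax N) => _ [_ [_ [_ [_ [_ [_ [r01 _]]]]]]]. Qed.

Lemma rinterp_lipschitz P (a b : 'I_(rarity P) -> carrier N) :
  rinterp N P a - rinterp N P b <= rlip P * tdist a b.
Proof. by case: (struct_ax N) => _ [_ [_ [_ [_ [_ [_ [_ rlipP]]]]]]]. Qed.

End StructureAxioms.

Section FormulaBound.
Variables (R : realType) (L : language R).

Fixpoint formula_bound (phi : formula L) : R :=
  match phi with
  | Fone | Fdist _ _ | Frel _ _ => 1
  | Fadd p q => formula_bound p + formula_bound q
  | Fscale r p => `|r| * formula_bound p
  | Fsup _ p | Finf _ p => formula_bound p
  end.

Lemma norm_feval_le (N : structure L) phi e :
  `|feval N phi e| <= formula_bound phi.
Proof.
elim: phi e => [|t1 t2|P ts|p IHp q IHq|r p IHp|x p IHp|x p IHp] e /=.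
- by rewrite normr1.
- by case/andP: (pdist_ge0_le1 (teval N e t1) (teval N e t2)) => *; rewrite ger0_norm.
- by case/andP: (rinterp_ge0_le1 (fun k => teval N e (ts k))) => *; rewrite ger0_norm.
- exact: le_trans (ler_normD _ _) (lerD (IHp e) (IHq e)).
- by rewrite normrM ler_wpM2l.
- exact: norm_sup_image_le (structure_inhabited N) _.
- exact: norm_inf_image_le (structure_inhabited N) _.
Qed.

End FormulaBound.

Lemma upd_map (T U : Type) (g : T -> U) (e : nat -> T) x m :
  upd (fun k => g (e k)) x (g m) = fun k => g (upd e x m k).
Proof. by apply: funext => y; rewrite /upd; case: eqP. Qed.

Section Ultramean.
Variables (R : realType) (L : language R) (I : Type) (mu : ultracharge R I)
  (M : I -> structure L).

Local Notation pd := (@prod_dist R L I mu M).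
Local Notation cl := (@um_class R L I mu M).
Local Notation UM := (ultramean mu M).

Lemma bounded_pdist (a b : prodT M) :
  bounded (fun i => pdist (M i) (a i) (b i)).
Proof. by apply: bounded01 => i; exact: pdist_ge0_le1. Qed.

Lemma prod_dist_ge0 a b : 0 <= pd a b.
Proof.
rewrite -(integral_cst mu 0).
apply: le_integral; [exact: bounded_cst|exact: bounded_pdist|].
by move=> i; case/andP: (pdist_ge0_le1 (a i) (b i)).
Qed.

Lemma prod_distxx a : pd a a = 0.
Proof.
by rewrite -(integral_cst mu 0); congr integral; apply: funext => i; exact: pdistxx.
Qed.

Lemma prod_distC a b : pd a b = pd b a.
Proof. by congr integral; apply: funext => i; exact: pdistC. Qed.

Lemma prod_dist_triangle a b c : pd a c <= pd a b + pd b c.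
Proof.
rewrite /prod_dist -integralD; try exact: bounded_pdist.
apply: le_integral; [exact: bounded_pdist|apply: boundedD; exact: bounded_pdist|].
by move=> i; exact: pdist_triangle.
Qed.

Lemma um_class_eq a b : pd a b = 0 -> cl a = cl b.
Proof.
move=> ab0; apply: eq_exist; apply/seteqP; split => c; rewrite /um_class_set /= => c0.
  have := prod_dist_triangle b a c; have := prod_dist_ge0 b c.
  by rewrite (prod_distC b a) ab0 c0; lra.
by have := prod_dist_triangle a b c; have := prod_dist_ge0 a c; rewrite ab0 c0; lra.
Qed.

Lemma prod_dist_um_rep a : pd (um_rep (cl a)) a = 0.
Proof.
rewrite prod_distC /um_rep; case: (cid _) => b /= ab.
have : um_class_set mu b b by rewrite /um_class_set /= prod_distxx.
by rewrite -ab.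
Qed.

Lemma um_classK xi : cl (um_rep xi) = xi.
Proof.
by case: xi => S p; rewrite /um_rep /=; case: (cid p) => b Sb; subst S; apply: eq_exist.
Qed.

Lemma um_pdist a b : pdist UM (cl a) (cl b) = pd a b.
Proof.
rewrite /=; have aa' := prod_dist_um_rep a; have bb' := prod_dist_um_rep b.
set a' := um_rep (cl a) in aa' *; set b' := um_rep (cl b) in bb' *.
have := prod_dist_triangle a' a b'; have := prod_dist_triangle a b b'.
have := prod_dist_triangle a a' b; have := prod_dist_triangle a' b' b.
by rewrite (prod_distC b b') (prod_distC a a') aa' bb'; lra.
Qed.

Lemma integral_sum_pdist_eq0 n (b b' : 'I_n -> prodT M) (lambda : R) :
  (forall k, pd (b k) (b' k) = 0) ->
  integral mu (fun i => lambda * \sum_(k < n) pdist (M i) (b k i) (b' k i)) = 0.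
Proof.
move=> bb'; rewrite integralZl; last by apply: bounded_sum => k; exact: bounded_pdist.
rewrite (integral_sum mu (fun k => bounded_pdist (b k) (b' k))).
by rewrite big1 ?mulr0 // => k _; exact: bb'.
Qed.

Lemma um_finterp F (xs : 'I_(farity F) -> prodT M) :
  finterp UM F (fun k => cl (xs k)) = cl (fun i => finterp (M i) F (fun k => xs k i)).
Proof.
apply: um_class_eq; apply/le_anti; rewrite prod_dist_ge0 andbT.
have rep0 k : pd (um_rep (cl (xs k))) (xs k) = 0 by exact: prod_dist_um_rep.
rewrite -(integral_sum_pdist_eq0 (flip F) rep0).
apply: le_integral; [exact: bounded_pdist| |by move=> i; exact: finterp_lipschitz].
by apply: boundedZ; apply: bounded_sum => k; exact: bounded_pdist.
Qed.

Lemma um_teval (a : nat -> prodT M) t :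
  teval UM (fun k => cl (a k)) t = cl (fun i => teval (M i) (fun k => a k i) t).
Proof.
elim/term_ind: t => [x|c|F ts IHts] //.
rewrite -[LHS]/(finterp UM F (fun k => teval UM (fun k => cl (a k)) (ts k))).
by rewrite (funext IHts) um_finterp.
Qed.

Lemma le_integral_rinterp P (xs ys : 'I_(rarity P) -> prodT M) :
  (forall k, pd (xs k) (ys k) = 0) ->
  integral mu (fun i => rinterp (M i) P (fun k => xs k i)) <=
  integral mu (fun i => rinterp (M i) P (fun k => ys k i)).
Proof.
move=> xy; set h := fun i => rlip P * \sum_(k < _) pdist (M i) (xs k i) (ys k i).
have bh : bounded h by apply: boundedZ; apply: bounded_sum => k; exact: bounded_pdist.
have brinterp (zs : 'I_(rarity P) -> prodT M) :
    bounded (fun i => rinterp (M i) P (fun k => zs k i)).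
  by apply: bounded01 => i; exact: rinterp_ge0_le1.
rewrite -[X in _ <= X]addr0 -(integral_sum_pdist_eq0 (rlip P) xy) -integralD //.
apply: le_integral => // [|i]; first exact: boundedD.
have := rinterp_lipschitz (fun k => xs k i) (fun k => ys k i).
by rewrite /h /tdist; lra.
Qed.

Lemma um_rinterp P (xs : 'I_(rarity P) -> prodT M) :
  rinterp UM P (fun k => cl (xs k)) =
  integral mu (fun i => rinterp (M i) P (fun k => xs k i)).
Proof.
apply/le_anti/andP; split; apply: le_integral_rinterp => k.
  exact: prod_dist_um_rep.
by rewrite prod_distC prod_dist_um_rep.
Qed.

Lemma bounded_feval phi (a : nat -> prodT M) :
  bounded (fun i => feval (M i) phi (fun k => a k i)).
Proof. by exists (formula_bound phi) => i; exact: norm_feval_le. Qed.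

Lemma um_image_feval_upd p x (a : nat -> prodT M) :
  (forall a : nat -> prodT M, feval UM p (fun k => cl (a k)) =
     integral mu (fun i => feval (M i) p (fun k => a k i))) ->
  [set feval UM p (upd (fun k => cl (a k)) x m) | m in [set: carrier UM]] =
  [set integral mu (fun i => feval (M i) p (upd (fun k => a k i) x (b i)))
     | b in [set: prodT M]].
Proof.
move=> IHp; have IHupd (b : prodT M) :
    feval UM p (upd (fun k => cl (a k)) x (cl b)) =
    integral mu (fun i => feval (M i) p (upd (fun k => a k i) x (b i))).
  rewrite upd_map IHp; congr integral; apply: funext => i.
  by rewrite -(upd_map (fun b : prodT M => b i)).
apply/seteqP; split => _ [m _ <-].
  by exists (um_rep m) => //; rewrite -IHupd um_classK.
by exists (cl m) => //; rewrite IHupd.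
Qed.

End Ultramean.

Theorem mainTheorem1 (R : realType) (L : language R) (I : Type)
  (HI : inhabited I) (mu : ultracharge R I) (M : I -> structure L)
  (phi : formula L) (a : nat -> forall i : I, carrier (M i)) :
  feval (ultramean mu M) phi (fun k => @um_class R L I mu M (a k)) =
  integral mu (fun i => feval (M i) phi (fun k => a k i)).
Proof.
elim: phi a => [|t1 t2|P ts|p IHp q IHq|r p IHp|x p IHp|x p IHp] a; cbn [feval].
- by rewrite integral_cst.
- by rewrite !um_teval um_pdist.
- by rewrite (funext (fun k => um_teval mu a (ts k))) um_rinterp.
- by rewrite IHp IHq integralD //; exact: bounded_feval.
- by rewrite IHp integralZl //; exact: bounded_feval.
- rewrite (um_image_feval_upd x a IHp); apply: integral_sup => [i|i m].
    exact: structure_inhabited.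
  exact: norm_feval_le.
- rewrite (um_image_feval_upd x a IHp); apply: integral_inf => [i|i m].
    exact: structure_inhabited.
  exact: norm_feval_le.
Qed.
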